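(* For all positive integers $n\geq 2$ and $t$, the set $D_{n,t}$ is a dominating set of $S(K_n,t)$.
   Context: For a positive integer $n$ let $[n]=\{1,\dots,n\}$. For positive integers $n,t$, the Sierpiński graph $S(K_n,t)$ is the simple graph with vertex set $[n]^t$ (words $v_1v_2\cdots v_t$ with $v_i\in[n]$), in which $u_1\cdots u_t$ and $v_1\cdots v_t$ are adjacent if and only if there is $s\in[t]$ with $u_j=v_j$ for all $j<s$, $u_s\neq v_s$, and $u_j=v_s$ and $v_j=u_s$ for all $j>s$. A set of vertices is dominating if every vertex lies in it or is adjacent to one of its elements. Write $a^k$ for the word consisting of $k$ copies of the letter $a$. The sets $D_{n,t}\subseteq[n]^t$ are defined recursively: $D_{n,1}=\{1\}$, $D_{n,2}=\{11,21,\dots,n1\}$. For $t\geq 3$ and $\mathbf v=v_1\cdots v_{t-2}\in D_{n,t-2}$ put $E_1(\mathbf v)=\{v_1\cdots v_{t-2}\alpha\alpha:\alpha\in[n]\}$, $E_2(\mathbf v)=\{v_1\cdots v_{t-3}\alpha\beta v_{t-2}:\alpha,\beta\in[n]\setminus\{v_{t-2}\}\}$, and, if $\mathbf v$ is not a constant word, let $\ell$ be the largest index in $[t-3]$ with $v_\ell\neq v_{\ell+1}$ and put $E_3(\mathbf v)=\{v_1\cdots v_{\ell-1}v_{\ell+1}v_\ell^{\,t-\ell-2}\alpha v_\ell:\alpha\in[n]\setminus\{v_\ell\}\}$. If $t\geq 3$ is odd, $D_{n,t}=E_1(1^{t-2})\cup E_2(1^{t-2})\cup\bigcup_{\mathbf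 v\in D_{n,t-2}\setminus\{1^{t-2}\}}\big(E_1(\mathbf v)\cup E_2(\mathbf v)\cup E_3(\mathbf v)\big)$. If $t\geq 4$ is even, $D_{n,t}=\{1^{t-2}\alpha1:\alpha\in[n]\}\cup\bigcup_{\mathbf v\in D_{n,t-2}\setminus\{1^{t-2}\}}\big(E_1(\mathbf v)\cup E_2(\mathbf v)\cup E_3(\mathbf v)\big)$. (In this recursion $1^{t-2}\in D_{n,t-2}$ is the only constant word in $D_{n,t-2}$, so $E_3$ is applied only to non-constant words.) *)

(* Words over [n] = {1..n} are represented as seq nat
   (0-indexed positions; letters are the nats 1..n). *)
From mathcomp Require Import all_boot.
Set Implicit Arguments. Unset Strict Implicit. Unset Printing Implicit Defensive.

Definition is_word (n t : nat) (w : seq nat) : bool :=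
  (size w == t) && all (fun a => (0 < a) && (a <= n)) w.

(* adjacency in S(K_n,t) (s is 0-indexed here) *)
Definition sier_adj (t : nat) (u v : seq nat) : Prop :=
  exists s, [/\ s < t,
    (forall j, j < s -> nth 0 u j = nth 0 v j),
    nth 0 u s <> nth 0 v s &
    (forall j, s < j < t -> nth 0 u j = nth 0 v s /\ nth 0 v j = nth 0 u s)].

Definition dominating (n t : nat) (D : seq (seq nat)) : Prop :=
  (forall d, d \in D -> is_word n t d) /\
  (forall w, is_word n t w -> w \in D \/ exists2 d, d \in D & sier_adj t w d).

Definition letters (n : nat) : seq nat := iota 1 n.

Definition E1 (n : nat) (v : seq nat) : seq (seq nat) :=
  [seq v ++ [:: a; a] | a <- letters n].

(* E_2(v), v = v_1 ... v_{t-2} nonempty *)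
Definition E2 (n : nat) (v : seq nat) : seq (seq nat) :=
  let k := size v in
  let vl := nth 0 v k.-1 in
  [seq take k.-1 v ++ [:: a; b; vl] |
     a <- [seq x <- letters n | x != vl], b <- [seq x <- letters n | x != vl]].

(* 0-indexed version of ell: largest i < size v - 1 with v_i != v_{i+1}
   (i.e. ell - 1 for the paper's 1-indexed ell) *)
Definition ell0 (v : seq nat) : nat :=
  last 0 [seq i <- iota 0 (size v).-1 | nth 0 v i != nth 0 v i.+1].

(* E_3(v) = { v_1..v_{ell-1} v_{ell+1} v_ell^{t-ell-2} alpha v_ell : alpha <> v_ell },
   with t - 2 = size v *)
Definition E3 (n : nat) (v : seq nat) : seq (seq nat) :=
  let k := size v in
  let l := ell0 v in
  let vl := nth 0 v l in
  [seq take l v ++ [:: nth 0 v l.+1] ++ nseq (k - l.+1) vl ++ [:: a; vl] |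
     a <- [seq x <- letters n | x != vl]].

Definition Eall (n : nat) (v : seq nat) : seq (seq nat) := E1 n v ++ E2 n v ++ E3 n v.

Fixpoint Dset (n t : nat) : seq (seq nat) :=
  match t with
  | 0 => [::]
  | 1 => [:: [:: 1]]
  | S (S t') =>
    if t' == 0 then [seq [:: a; 1] | a <- letters n]
    else
      let prev := Dset n t' in
      let rest := flatten [seq Eall n v | v <- prev & v != nseq t' 1] in
      if odd t then E1 n (nseq t' 1) ++ E2 n (nseq t' 1) ++ rest
      else [seq nseq t' 1 ++ [:: a; 1] | a <- letters n] ++ rest
  end.

From mathcomp Require Import all_boot zify.
Set Implicit Arguments. Unset Strict Implicit. Unset Printing Implicit Defensive.

(* The proof is by induction on t in steps of two, as in the paper.  The edges
   of S(K_n,k) are exactly the pairs  p a b^m -- p b a^m  with a <> b.  Write a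
   vertex of S(K_n,k+2) as  u x y  with |u| = k.  By induction u lies in
   D_{n,k} or is adjacent to some d in D_{n,k}.
   - If u is in D_{n,k}, then some word  u x z  lies in D_{n,k+2} (in E_1(u),
     or of the form 1^k x 1), and  u x y  differs from it in its last letter.
   - Otherwise  u = p a b^m  and, after replacing d when d = 1^k with k even,
     d = p b a^m  is such that D_{n,k+2} contains every  p a b^m c b  (c <> b,
     from E_3(d), or E_2(d) when m = 0) and  d a a = p b a^(m+2)  (from
     E_1(d)); a case analysis on x = b, y = b shows that u x y is dominated. *)

Lemma mem_letters n a : (a \in letters n) = (0 < a <= n).
Proof. by rewrite /letters mem_iota; lia. Qed.

Lemma is_wordP n t w :
  reflect (size w = t /\ {in w, forall a, 0 < a <= n}) (is_word n t w).
Proof.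
by apply: (iffP andP) => [[/eqP -> /allP H]|[-> /allP H]]; split.
Qed.

Lemma mem_nseq_eq (m c x : nat) : x \in nseq m c -> x = c.
Proof. by rewrite mem_nseq => /andP[_ /eqP]. Qed.

Lemma nth_swap_head (p : seq nat) (a b m : nat) :
  nth 0 (p ++ a :: nseq m b) (size p) = a.
Proof. by rewrite nth_cat ltnn subnn. Qed.

Lemma nth_swap_tail (p : seq nat) (a b m i : nat) :
  size p < i < size p + m.+1 -> nth 0 (p ++ a :: nseq m b) i = b.
Proof.
move=> /andP[lo hi]; rewrite nth_cat ltnNge (ltnW lo) /=.
by case E: (i - size p) => [|j]; [lia | rewrite /= nth_nseq ifT //; lia].
Qed.

Lemma sier_adj_swap t (p : seq nat) (a b m : nat) :
  a != b -> t = size p + m.+1 ->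
  sier_adj t (p ++ a :: nseq m b) (p ++ b :: nseq m a).
Proof.
move=> ab ->; exists (size p); split.
- lia.
- by move=> j lt_jp; rewrite !nth_cat lt_jp.
- by rewrite !nth_swap_head; apply/eqP.
- by move=> j Hj; rewrite !nth_swap_head !nth_swap_tail.
Qed.

Lemma sier_adj_shape t (u v : seq nat) :
  size u = t -> size v = t -> sier_adj t u v ->
  exists p a b m, [/\ a != b, u = p ++ a :: nseq m b & v = p ++ b :: nseq m a].
Proof.
move=> Su Sv [s [lt_st same diff tail]].
exists (take s u), (nth 0 u s), (nth 0 v s), (t - s.+1); split; first exact/eqP.
all: apply: (@eq_from_nth _ 0) => [|i Hi];
  first by rewrite size_cat size_takel /= ?size_nseq; lia.
all: rewrite nth_cat size_takel; last lia.
all: case: ltnP => [lt_is|le_si]; first by rewrite nth_take ?same.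
all: case E: (i - s) => [|j] /=; first by have ->: i = s by lia.
all: rewrite nth_nseq ifT; last lia.
all: by case: (tail i); first lia.
Qed.

Definition dominated (t : nat) (D : seq (seq nat)) (w : seq nat) : Prop :=
  w \in D \/ exists2 d, d \in D & sier_adj t w d.

Lemma dominated_last_letter t (D : seq (seq nat)) (q : seq nat) (y z : nat) :
  q ++ [:: z] \in D -> t = (size q).+1 -> dominated t D (q ++ [:: y]).
Proof.
move=> qzD Ht; case: (eqVneq y z) => [->|yz]; first by left.
right; exists (q ++ [:: z]) => //.
by apply: (@sier_adj_swap t q y z 0) => //; rewrite addn1.
Qed.

Lemma dominated_swap t (D : seq (seq nat)) (p : seq nat) (a b m : nat) :
  p ++ b :: nseq m a \in D -> a != b -> t = size p + m.+1 ->
  dominated t D (p ++ a :: nseq m b).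
Proof.
by move=> dD ab Ht; right; exists (p ++ b :: nseq m a); last apply: sier_adj_swap.
Qed.

Lemma dominated_two_letter_extension n t (D : seq (seq nat)) (p : seq nat)
    (a b m x y : nat) :
  a != b -> t = size p + m.+3 ->
  (forall c, 0 < c <= n -> c != b -> p ++ a :: nseq m b ++ [:: c; b] \in D) ->
  p ++ b :: nseq m.+2 a \in D ->
  0 < x <= n -> 0 < y <= n -> dominated t D (p ++ a :: nseq m b ++ [:: x; y]).
Proof.
move=> ab Ht ends_b swapD Hx Hy.
have nseq2 (c : nat) : nseq m c ++ [:: c; c] = nseq m.+2 c by rewrite -addn2 nseqD.
set q := p ++ a :: nseq m b.
have Sq : size q = size p + m.+1 by rewrite size_cat /= size_nseq.
have -> : p ++ a :: nseq m b ++ [:: x; y] = q ++ [:: x; y] by rewrite /q -catA.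
have ends_bD c : 0 < c <= n -> c != b -> q ++ [:: c; b] \in D.
  by move=> Hc cb; rewrite -catA; apply: ends_b.
case: (eqVneq x b) => [->|xb]; last first.
  rewrite -[[:: x; y]]/([:: x] ++ [:: y]) catA.
  apply: (@dominated_last_letter _ _ _ y b); last by rewrite size_cat Sq /=; lia.
  by rewrite -catA; apply: ends_bD.
case: (eqVneq y b) => [->|yb]; last first.
  by apply: (@dominated_swap t D q b y 1); [exact: ends_bD | rewrite eq_sym | lia].
rewrite /q -catA cat_cons nseq2.
by apply: dominated_swap; last lia.
Qed.

Lemma E1_mem n (v : seq nat) (a : nat) :
  0 < a <= n -> v ++ [:: a; a] \in E1 n v.
Proof. by move=> Ha; apply/mapP; exists a; rewrite ?mem_letters. Qed.

Lemma E2_mem n (p : seq nat) (a c b : nat) :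
  0 < a <= n -> 0 < c <= n -> a != b -> c != b ->
  p ++ [:: a; c; b] \in E2 n (p ++ [:: b]).
Proof.
move=> Ha Hc ab cb; rewrite /E2 size_cat addn1 /= take_size_cat //.
rewrite nth_cat ltnn subnn /=.
by apply/allpairsP; exists (a, c); rewrite /= !mem_filter !mem_letters ab cb Ha Hc.
Qed.

(* In [p b a^m] with b <> a and m > 0 the last change of letter happens right
   after [p], so the index [ell] of the paper is |p| + 1. *)
Lemma ell0_swap (p : seq nat) (a b m : nat) :
  b != a -> 0 < m -> ell0 (p ++ b :: nseq m a) = size p.
Proof.
move=> ba; case: m => [|m] // _; rewrite /ell0; set v := p ++ b :: nseq m.+1 a.
have -> : (size v).-1 = size p + m.+1 by rewrite size_cat /= size_nseq; lia.
rewrite iotaD add0n /= filter_cat /=.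
rewrite nth_swap_head nth_swap_tail ?ba; last lia.
have no_change : ~~ has (fun i => nth 0 v i != nth 0 v i.+1) (iota (size p).+1 m).
  apply/hasPn => i; rewrite mem_iota => Hi.
  by rewrite !nth_swap_tail ?eqxx //; lia.
by move: no_change; rewrite has_filter negbK => /eqP ->; rewrite last_cat.
Qed.

Lemma E3_mem n (p : seq nat) (a b m c : nat) :
  b != a -> 0 < m -> 0 < c <= n -> c != b ->
  p ++ a :: nseq m b ++ [:: c; b] \in E3 n (p ++ b :: nseq m a).
Proof.
move=> ba m0 Hc cb; rewrite /E3 ell0_swap // take_size_cat //.
rewrite nth_swap_head nth_swap_tail; last lia.
rewrite size_cat /= size_nseq (_ : size p + m.+1 - (size p).+1 = m); last lia.
by apply/mapP; exists c; rewrite ?mem_filter ?cb ?mem_letters.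
Qed.

Lemma Dset_unfold n k : 0 < k ->
  Dset n k.+2 =
    (if odd k then E1 n (nseq k 1) ++ E2 n (nseq k 1)
     else [seq nseq k 1 ++ [:: a; 1] | a <- letters n])
    ++ flatten [seq Eall n v | v <- Dset n k & v != nseq k 1].
Proof. by case: k => [|k] //= _; rewrite negbK; case: (odd k); rewrite ?catA. Qed.

(* A word d of D_{n,k} "spawns" E_1(d) and E_2(d) inside D_{n,k+2} unless d is
   the constant word 1^k with k even. *)
Definition generic_parent (k : nat) (d : seq nat) : bool :=
  (d != nseq k 1) || odd k.

Lemma Dset_Eall n k (d y : seq nat) :
  0 < k -> d \in Dset n k -> d != nseq k 1 -> y \in Eall n d -> y \in Dset n k.+2.
Proof.
move=> k0 dD d1 yE; rewrite Dset_unfold // mem_cat; apply/orP; right.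
by apply/flatten_mapP; exists d; rewrite ?mem_filter ?d1.
Qed.

Lemma Dset_E12 n k (d y : seq nat) :
  0 < k -> d \in Dset n k -> generic_parent k d ->
  y \in E1 n d ++ E2 n d -> y \in Dset n k.+2.
Proof.
move=> k0 dD gen yE; case: (eqVneq d (nseq k 1)) => [d1|d1].
  move: gen; rewrite /generic_parent d1 eqxx orFb => ok.
  by rewrite Dset_unfold // ok -d1 mem_cat yE.
by apply: (Dset_Eall k0 dD d1); rewrite /Eall catA mem_cat yE.
Qed.

Lemma Dset_E3 n k (d y : seq nat) :
  0 < k -> d \in Dset n k -> d != nseq k 1 -> y \in E3 n d -> y \in Dset n k.+2.
Proof.
by move=> k0 dD d1 yE; apply: (Dset_Eall k0 dD d1); rewrite /Eall !mem_cat yE !orbT.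
Qed.

Lemma Dset_even_base n j (a : nat) :
  ~~ odd j -> 0 < a <= n -> nseq j 1 ++ [:: a; 1] \in Dset n j.+2.
Proof.
case: j => [|j] ev Ha; first by apply/mapP; exists a; rewrite ?mem_letters.
rewrite Dset_unfold // (negbTE ev) mem_cat; apply/orP; left.
by apply/mapP; exists a; rewrite ?mem_letters.
Qed.

Lemma E1_words n k (v y : seq nat) :
  is_word n k v -> y \in E1 n v -> is_word n k.+2 y.
Proof.
move=> /is_wordP[Sv Hv] /mapP[a]; rewrite mem_letters => Ha ->.
apply/is_wordP; split; first by rewrite size_cat Sv addn2.
by move=> x; rewrite mem_cat => /orP[/Hv //|]; rewrite !inE => /orP[] /eqP ->.
Qed.

Lemma E2_words n k (v y : seq nat) :
  0 < k -> is_word n k v -> y \in E2 n v -> is_word n k.+2 y.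
Proof.
move=> k0 /is_wordP[Sv Hv] /allpairsP[[a c] /= []].
rewrite !mem_filter !mem_letters => /andP[_ Ha] /andP[_ Hc] ->.
have Hlast : 0 < nth 0 v (size v).-1 <= n by apply/Hv/mem_nth; rewrite Sv prednK.
apply/is_wordP; split; first by rewrite size_cat size_takel ?leq_pred //= Sv; lia.
move=> x; rewrite mem_cat => /orP[/mem_take /Hv //|].
by rewrite !inE => /or3P[] /eqP ->.
Qed.

(* [ell] is followed by a letter of v, so E_3 only uses letters of v. *)
Lemma ell0_lt (v : seq nat) : 2 <= size v -> (ell0 v).+1 < size v.
Proof.
move=> v2; rewrite /ell0; set s := filter _ _.
suff Hs x : x \in 0 :: s -> x.+1 < size v by apply/Hs/mem_last.
rewrite inE => /orP[/eqP ->|]; first lia.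
by rewrite mem_filter mem_iota => /andP[_]; lia.
Qed.

Lemma E3_words n k (v y : seq nat) :
  2 <= k -> is_word n k v -> y \in E3 n v -> is_word n k.+2 y.
Proof.
move=> k2 /is_wordP[Sv Hv] /mapP[a].
rewrite mem_filter mem_letters => /andP[_ Ha] ->.
have Hl : (ell0 v).+1 < k by rewrite -Sv ell0_lt ?Sv.
have Hnth i : i < k -> 0 < nth 0 v i <= n.
  by move=> lt_ik; apply/Hv/mem_nth; rewrite Sv.
apply/is_wordP; split; first by rewrite !size_cat size_takel Sv /= ?size_nseq; lia.
move=> x; rewrite !mem_cat => /or3P[/mem_take /Hv //| |].
  by rewrite inE => /eqP ->; apply: Hnth.
move=> /orP[/mem_nseq_eq ->|]; first by apply: Hnth; lia.
by rewrite !inE => /orP[] /eqP ->; last apply: Hnth; lia.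
Qed.

Lemma nseq1_word n k : 0 < n -> is_word n k (nseq k 1).
Proof.
by move=> n0; apply/is_wordP; split=> [|x /mem_nseq_eq ->]; rewrite ?size_nseq ?n0.
Qed.

Lemma Dset_words n t : 0 < n -> {in Dset n t, forall d, is_word n t d}.
Proof.
move=> n0; elim/ltn_ind: t => -[|[|[|k]]] IH d //.
- by rewrite inE => /eqP ->; rewrite /is_word /= n0.
- by move=> /mapP[a]; rewrite mem_letters => Ha ->; rewrite /is_word /= Ha n0.
rewrite Dset_unfold // mem_cat => /orP[|/flatten_mapP[v]].
  case: ifP => _; first by rewrite mem_cat => /orP[/E1_words | /E2_words];
    apply; rewrite ?nseq1_word.
  move=> /mapP[a]; rewrite mem_letters => Ha ->.
  apply/is_wordP; split; first by rewrite size_cat size_nseq addn2.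
  move=> x; rewrite mem_cat => /orP[/mem_nseq_eq ->|]; first by rewrite n0.
  by rewrite !inE => /orP[] /eqP ->; rewrite ?n0.
rewrite mem_filter => /andP[v1 vD]; have vw := IH _ (leqW (ltnSn _)) _ vD.
rewrite /Eall !mem_cat => /or3P.
case=> [/E1_words | /E2_words | /E3_words]; apply=> //.
case: k v1 vD vw {IH} => [|k] v1 vD _ //.
by move: vD v1; rewrite inE => /eqP ->.
Qed.

(* Induction step, first case: a prefix u in D_{n,k} can be completed inside
   D_{n,k+2} by any next letter x (via E_1(u), or via 1^k x 1 when u = 1^k
   with k even). *)
Lemma Dset_extend_member n k (u : seq nat) (x : nat) :
  0 < k -> u \in Dset n k -> 0 < x <= n ->
  exists z, u ++ [:: x; z] \in Dset n k.+2.
Proof.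
move=> k0 uD Hx; case: (boolP (generic_parent k u)) => gen.
  by exists x; apply: (Dset_E12 k0 uD gen); rewrite mem_cat E1_mem.
move: gen; rewrite /generic_parent negb_or negbK => /andP[/eqP -> ev].
by exists 1; apply: Dset_even_base; rewrite ?ev.
Qed.

(* Induction step, second case: a prefix u adjacent to D_{n,k} is adjacent to
   some d = p b a^m in D_{n,k} that has an E_3 block (m > 0) or E_1, E_2
   blocks in D_{n,k+2}.  The only exception to the first choice, d = 1^k with
   k even and m = 0, is repaired by the neighbour 1^(k-2) a 1 of u. *)
Lemma adjacent_to_generic n k (u d : seq nat) :
  0 < k -> d \in Dset n k -> is_word n k u -> size d = k -> sier_adj k u d ->
  exists p a b m, [/\ a != b, u = p ++ a :: nseq m b,
    p ++ b :: nseq m a \in Dset n k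
    & (0 < m) || generic_parent k (p ++ b :: nseq m a)].
Proof.
move=> k0 dD /is_wordP[Su Hu] Sd ud.
have [p [a [b [m [ab Eu Ed]]]]] := sier_adj_shape Su Sd ud.
case: (boolP ((0 < m) || generic_parent k d)) => gen.
  by exists p, a, b, m; rewrite -Ed.
move: gen; rewrite /generic_parent !negb_or negbK -eqn0Ngt.
move=> /and3P[/eqP m0 /eqP d1 ev].
have Sp : size p = k.-1 by move: Su; rewrite Eu size_cat m0 /= addn1 => <-.
case: k k0 Sp d1 ev {Su Sd ud dD} => [|[|j]] // _ Sp d1 ev.
have [Ep Eb] : p = nseq j.+1 1 /\ b = 1.
  move: d1; rewrite Ed m0 -addn1 nseqD => /eqP.
  by rewrite eqseq_cat ?size_nseq // => /andP[/eqP -> /eqP [->]].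
have Ha : 0 < a <= n by apply: Hu; rewrite Eu mem_cat mem_head orbT.
exists (nseq j 1), 1, a, 1; split; first by rewrite eq_sym -Eb.
- by rewrite Eu Ep m0 -addn1 nseqD -catA.
- by apply: Dset_even_base => //; move: ev => /=; rewrite negbK.
- by [].
Qed.

(* Given such a d = p b a^m, D_{n,k+2} contains all the words required by
   [dominated_two_letter_extension]: p a b^m c b (from E_3(d), or from E_2(d)
   when m = 0) and d a a = p b a^(m+2) (from E_1(d)). *)
Lemma Dset_swap_extensions n k (p : seq nat) (a b m : nat) :
  0 < k -> a != b -> 0 < a <= n -> p ++ b :: nseq m a \in Dset n k ->
  (0 < m) || generic_parent k (p ++ b :: nseq m a) ->
  (forall c, 0 < c <= n -> c != b ->
     p ++ a :: nseq m b ++ [:: c; b] \in Dset n k.+2)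
  /\ p ++ b :: nseq m.+2 a \in Dset n k.+2.
Proof.
move=> k0 ab Ha dD good.
have d1 : 0 < m -> p ++ b :: nseq m a != nseq k 1.
  move=> m0; apply: contra_neq ab => dk.
  have /mem_nseq_eq -> : a \in nseq k 1.
    by rewrite -dk mem_cat inE mem_nseq m0 eqxx !orbT.
  have /mem_nseq_eq -> : b \in nseq k 1 by rewrite -dk mem_cat mem_head orbT.
  by [].
have gen : generic_parent k (p ++ b :: nseq m a).
  by case/orP: good => // /d1; rewrite /generic_parent => ->.
split=> [c Hc cb|].
  case: m dD gen d1 {good} => [|m] dD gen d1.
    by apply: (Dset_E12 k0 dD gen); rewrite mem_cat E2_mem ?orbT.
  by apply: (Dset_E3 k0 dD (d1 isT)); apply: E3_mem; rewrite // eq_sym.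
have -> : nseq m.+2 a = nseq m a ++ [:: a; a] by rewrite -addn2 nseqD.
by apply: (Dset_E12 k0 dD gen); rewrite -cat_cons catA mem_cat E1_mem.
Qed.

Lemma split_last_two (w : seq nat) k :
  size w = k.+2 -> exists u x y, w = u ++ [:: x; y] /\ size u = k.
Proof.
move=> Sw; have: size (drop k w) = 2 by rewrite size_drop Sw; lia.
case Ed: (drop k w) => [|x [|y [|]]] // _.
exists (take k w), x, y; rewrite -Ed cat_take_drop size_takel // Sw; lia.
Qed.

Lemma Dset_dominates_step n k :
  0 < k -> dominating n k (Dset n k) ->
  forall w, is_word n k.+2 w -> dominated k.+2 (Dset n k.+2) w.
Proof.
move=> k0 [DW DD] w /is_wordP[Sw Hw].
have [u [x [y [Ew Su]]]] := split_last_two Sw; subst w.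
have Hu c : c \in u -> 0 < c <= n by move=> cu; apply: Hw; rewrite mem_cat cu.
have Hx : 0 < x <= n by apply: Hw; rewrite mem_cat !inE eqxx orbT.
have Hy : 0 < y <= n by apply: Hw; rewrite mem_cat !inE eqxx !orbT.
have uw : is_word n k u by apply/is_wordP.
case: (DD u uw) => [uD | [d dD ud]].
  have [z uxzD] := Dset_extend_member k0 uD Hx.
  rewrite -[[:: x; y]]/([:: x] ++ [:: y]) catA.
  apply: (@dominated_last_letter _ _ _ y z); first by rewrite -catA.
  by rewrite size_cat Su addn1.
have /is_wordP[Sd _] := DW d dD.
have [p [a [b [m [ab Eu pD good]]]]] := adjacent_to_generic k0 dD uw Sd ud.
have Ha : 0 < a <= n by apply: Hu; rewrite Eu mem_cat mem_head orbT.
have [ends_b swapD] := Dset_swap_extensions k0 ab Ha pD good.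
rewrite Eu -catA cat_cons.
apply: dominated_two_letter_extension ends_b swapD Hx Hy => //.
by rewrite -Su Eu size_cat /= size_nseq; lia.
Qed.

Lemma Dset1_dominates n w : is_word n 1 w -> dominated 1 (Dset n 1) w.
Proof.
case: w => [|c [|]] // _.
by apply: (@dominated_last_letter 1 _ [::] c 1); rewrite ?inE.
Qed.

Lemma Dset2_dominates n w : is_word n 2 w -> dominated 2 (Dset n 2) w.
Proof.
case: w => [|x [|y []]] // /is_wordP[_ Hw].
apply: (@dominated_last_letter 2 _ [:: x] y 1) => //.
by apply: (@Dset_even_base n 0 x) => //; apply/Hw/mem_head.
Qed.

Theorem theorem2p6 (n t : nat) : 2 <= n -> 0 < t -> dominating n t (Dset n t).
Proof.
move=> n2; have n0 : 0 < n by apply: ltnW.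
elim/ltn_ind: t => t IH t0; split; first exact: Dset_words.
case: t t0 IH => [|[|[|k]]] // _ IH w.
- exact: Dset1_dominates.
- exact: Dset2_dominates.
- by apply: Dset_dominates_step => //; apply: IH.
Qed.
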